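(* Let $t\geqslant 2$ be an integer, let $r\in\{2t,2t+1\}$, and let $n\geqslant 2r$. Then $$N(n,2r,r)=\begin{cases}\binom{2t}{t}, & \text{if } r=2t,\\[2pt] 2\binom{2t-2}{t-1}, & \text{if } r=2t+1.\end{cases}$$
   Context: $\mathrm{Sym}_n$ is the symmetric group of permutations of $[n]=\{1,\dots,n\}$, and $I_n$ is the identity permutation. The Hamming distance between $\pi,\tau\in\mathrm{Sym}_n$ is $d(\pi,\tau)=|\{i\in[n]:\pi(i)\neq\tau(i)\}|$. The ball of radius $r$ is $B_r(\pi)=\{\tau\in\mathrm{Sym}_n: d(\pi,\tau)\leqslant r\}$. For integers $d,r$ define $I(n,d,r)=\max_{\pi,\tau\in\mathrm{Sym}_n,\ d(\pi,\tau)=d}|B_r(\pi)\cap B_r(\tau)|$ (taken to be $0$ if the intersections are all empty) and $N(n,d,r)=\max_{\pi,\tau\in\mathrm{Sym}_n,\ d(\pi,\tau)\geqslant d}|B_r(\pi)\cap B_r(\tau)|=\max_{k\geqslant d}I(n,k,r)$. *)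

From mathcomp Require Import all_boot all_fingroup.
Set Implicit Arguments. Unset Strict Implicit. Unset Printing Implicit Defensive.

Definition hdist (n : nat) (p q : {perm 'I_n}) : nat := #|[set i | p i != q i]|.

Definition hball (n r : nat) (p : {perm 'I_n}) : {set {perm 'I_n}} :=
  [set s | hdist p s <= r].

Definition Ival (n d r : nat) : nat :=
  \max_(pq : {perm 'I_n} * {perm 'I_n} | hdist pq.1 pq.2 == d)
     #|hball r pq.1 :&: hball r pq.2|.

Definition Nval (n d r : nat) : nat :=
  \max_(pq : {perm 'I_n} * {perm 'I_n} | d <= hdist pq.1 pq.2)
     #|hball r pq.1 :&: hball r pq.2|.

From mathcomp Require Import all_boot all_fingroup zify.
Set Implicit Arguments. Unset Strict Implicit. Unset Printing Implicit Defensive.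

(* If [s] lies in the balls of radius [r] around [p] and [q] with [d(p,q) >= 2r], then
   [d(p,q) = 2r] and [s] agrees with [q] on the [r] points where it differs from [p];
   these points form a set stable under [g = p^-1 q] that determines [s].  Conversely
   every [g]-stable [r]-subset of the support of [g] yields such an [s].  Hence
   N(n,2r,r) is the largest number of subfamilies of the cycle lengths of a
   fixed-point-free permutation of [2r] points that sum to [r].  Splitting a cycle into
   parts 2 and 3 never decreases this number; for [a] parts 3 and [b] parts 2 it is
   sum_j C(a,j) C(b,(r-3j)/2), which Pascal's rule and Vandermonde's identity bound by
   C(2t,t) if r = 2t and by 2 C(2t-2,t-1) if r = 2t+1.  The bounds are attained by
   2t transpositions, resp. by two 3-cycles and 2t-2 transpositions. *)

Fixpoint nsubsum (s : seq nat) (k : nat) : nat :=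
  if s is l :: s' then nsubsum s' k + (if l <= k then nsubsum s' (k - l) else 0)
  else (k == 0 : nat).

(* [nsub23 a b k] is [nsubsum] of [a] threes and [b] twos (see [nsubsum_23]),
   expanded over the number [j] of threes used. *)
Definition nsub2 (b k s : nat) : nat :=
  if (s <= k) && ~~ odd (k - s) then 'C(b, (k - s)./2) else 0.

Definition nsub23 (a b k : nat) : nat := \sum_(j < a.+1) 'C(a, j) * nsub2 b k (3 * j).

Definition is23 (l : nat) : bool := (l == 2) || (l == 3).

Lemma nsub2S b k s :
  nsub2 b.+1 k s = nsub2 b k s + (if 2 <= k then nsub2 b (k - 2) s else 0).
Proof.
rewrite /nsub2; case: ifP => h1; last first.
  case: ifP => h2 //; rewrite ifF //; apply/negbTE; move/negbT: h1; lia.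
have [->|hk] := eqVneq s k.
  rewrite subnn /= !bin0.
  by case: ifP => // h2; rewrite ifF ?addn0 //; apply/negbTE; lia.
have -> : 2 <= k by lia.
rewrite ifT; last by move: h1; lia.
have -> : (k - s)./2 = ((k - 2 - s)./2).+1 by lia.
rewrite binS addnC; congr (_ + _); congr 'C(_, _); lia.
Qed.

Lemma nsub2_mul3S b k j :
  nsub2 b k (3 * j.+1) = if 3 <= k then nsub2 b (k - 3) (3 * j) else 0.
Proof.
rewrite /nsub2; case: ifP => h3.
  have -> : k - 3 * j.+1 = k - 3 - 3 * j by lia.
  rewrite ifT; last by move: h3; lia.
  by rewrite ifT //; move: h3; lia.
case: ifP => // h4; rewrite ifF //; apply/negbTE; move/negbT: h3; lia.
Qed.

Lemma nsub23Sl a b k :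
  nsub23 a.+1 b k = nsub23 a b k + (if 3 <= k then nsub23 a b (k - 3) else 0).
Proof.
rewrite /nsub23 big_ord_recl /= bin0 mul1n.
under eq_bigr => i _ do rewrite binS mulnDl.
rewrite big_split /= big_ord_recr /= bin_small // mul0n addn0.
rewrite [in RHS]big_ord_recl /= bin0 mul1n -!addnA; congr (_ + (_ + _)).
under eq_bigr => i _ do rewrite nsub2_mul3S.
by case: ifP => // _; rewrite big1 // => i _; rewrite muln0.
Qed.

Lemma nsub23Sr a b k :
  nsub23 a b.+1 k = nsub23 a b k + (if 2 <= k then nsub23 a b (k - 2) else 0).
Proof.
rewrite /nsub23; under eq_bigr => i _ do rewrite nsub2S mulnDr.
rewrite big_split /=; congr (_ + _).
by case: ifP => // _; rewrite big1 // => i _; rewrite muln0.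
Qed.

Lemma nsubsum_23 s k : all is23 s ->
  nsubsum s k = nsub23 (count_mem 3 s) (count_mem 2 s) k.
Proof.
elim: s k => [|l s IH] k /=.
  move=> _; rewrite /nsub23 big_ord_recl big_ord0 addn0 bin0 mul1n /nsub2.
  rewrite subn0 leq0n /=; case: k => [|k] //=.
  by case: ifP => // h; rewrite bin_small //; move: h; lia.
by case/andP => /orP [] /eqP -> hs; rewrite /= add0n add1n ?nsub23Sl ?nsub23Sr !IH.
Qed.

Lemma sumn_23 s : all is23 s -> sumn s = 3 * count_mem 3 s + 2 * count_mem 2 s.
Proof.
elim: s => [|l s IH] //= /andP [/orP [] /eqP -> hs]; rewrite IH //=; lia.
Qed.

Lemma leq_bin_succ n k : 2 * k + 1 <= n -> 'C(n, k) <= 'C(n, k.+1).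
Proof.
move=> h; rewrite -(@leq_pmul2l k.+1) // mul_bin_left.
by apply: leq_mul => //; lia.
Qed.

Lemma leq_bin_subn_addn b e y w : w <= e -> w <= y -> 'C(b, y - w) <= 'C(b + e, y).
Proof.
move=> we wy; apply: (@leq_trans 'C(b + w, y)); last by apply: leq_bin2l; lia.
elim: w y wy {we} => [|w IH] y wy; first by rewrite subn0 addn0.
case: y wy => [|y] wy //.
by rewrite subSS addnS binS; apply: leq_trans (leq_addl _ _); apply: IH.
Qed.

Lemma sum_ord_addn_0 n d (f : nat -> nat) : (forall u, n <= u -> f u = 0) ->
  \sum_(u < n + d) f u = \sum_(u < n) f u.
Proof.
move=> hf; elim: d => [|d IH]; first by rewrite addn0.
by rewrite addnS big_ord_recr /= IH hf ?addn0 // leq_addr.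
Qed.

Lemma sum_binS_mul n (f : nat -> nat) :
  \sum_(j < n.+2) 'C(n.+1, j) * f j = \sum_(u < n.+1) 'C(n, u) * (f u + f u.+1).
Proof.
rewrite big_ord_recl /= bin0 mul1n.
under eq_bigr => i _ do rewrite binS mulnDl.
rewrite big_split /= big_ord_recr /= bin_small // mul0n addn0.
under [in RHS]eq_bigr => i _ do rewrite mulnDr.
by rewrite big_split /= [in RHS]big_ord_recl /= bin0 mul1n -!addnA.
Qed.

(* With [3 e + b = 2 x], the pairs of terms of [nsub23 (2 e).+1 b (2 x)] merged by
   Pascal's rule are dominated termwise by Vandermonde's expansion of ['C(2 x, x)]. *)
Lemma nsub2_pair_le e b x u : 3 * e + b = 2 * x -> u <= 2 * e ->
  nsub2 b (2 * x) (3 * u) + nsub2 b (2 * x) (3 * u.+1)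
    <= if u <= x then 'C(b + e, x - u) else 0.
Proof.
move=> hx hu; rewrite /nsub2.
have [ou|eu] := boolP (odd u).
  rewrite [X in X + _]ifF; last by apply/negbTE; lia.
  rewrite add0n.
  case: ifP => // h1.
  have [g [def_u g1]] : exists g, u = (2 * g).-1 /\ 1 <= g by exists (u.+1)./2; lia.
  subst u.
  rewrite ifT; last by lia.
  have -> : (2 * x - 3 * (2 * g).-1.+1)./2 = x - 3 * g by lia.
  have [ge|ge] := leqP (g + 1) e.
    have -> : x - 3 * g = (x - (2 * g).-1) - (g + 1) by lia.
    by apply: leq_bin_subn_addn; lia.
  have eg : g = e by lia.
  subst g; apply: (@leq_trans 'C(b, (x - 3 * e).+1)); first by apply: leq_bin_succ; lia.
  have -> : (x - 3 * e).+1 = (x - (2 * e).-1) - e by lia.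
  by apply: leq_bin_subn_addn; lia.
rewrite [X in _ + X]ifF; last by apply/negbTE; lia.
rewrite addn0.
case: ifP => // h1.
have [g def_u] : exists g, u = 2 * g by exists u./2; lia.
subst u.
rewrite ifT; last by lia.
have -> : (2 * x - 3 * (2 * g))./2 = (x - 2 * g) - g by lia.
by apply: leq_bin_subn_addn; lia.
Qed.

Lemma nsub23_odd_le e b x : 3 * e + b = 2 * x -> nsub23 (2 * e).+1 b (2 * x) <= 'C(2 * x, x).
Proof.
move=> hx; rewrite /nsub23 (sum_binS_mul (2 * e) (fun j => nsub2 b (2 * x) (3 * j))) /=.
have -> : 2 * x = 2 * e + (b + e) by lia.
rewrite -Vandermonde.
have -> : 2 * e + (b + e) = 2 * x by lia.
pose term u := 'C(2 * e, u) * (nsub2 b (2 * x) (3 * u) + nsub2 b (2 * x) (3 * u.+1)).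
pose vterm u := 'C(2 * e, u) * (if u <= x then 'C(b + e, x - u) else 0).
have -> : \sum_(u < (2 * e).+1) term u = \sum_(u < (2 * e).+1 + x.+1) term u.
  by rewrite sum_ord_addn_0 // => u hu; rewrite /term bin_small ?mul0n.
have -> : \sum_(u < x.+1) 'C(2 * e, u) * 'C(b + e, x - u)
        = \sum_(u < x.+1 + (2 * e).+1) vterm u.
  rewrite sum_ord_addn_0; last by move=> u hu; rewrite /vterm leqNgt hu muln0.
  by apply: eq_bigr => u _; rewrite /vterm ifT // -ltnS.
rewrite [x.+1 + _]addnC; apply: leq_sum => u _.
have [hu|hu] := leqP u (2 * e); last by rewrite /term bin_small.
by rewrite leq_mul2l nsub2_pair_le ?orbT.
Qed.

Lemma nsubsum_gt s k : sumn s < k -> nsubsum s k = 0.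
Proof.
elim: s k => [|l s IH] k /= h; first by case: k h.
rewrite IH; last by lia.
by case: ifP => // hl; rewrite IH //; lia.
Qed.

Lemma nsubsum_compl s k : k <= sumn s -> nsubsum s k = nsubsum s (sumn s - k).
Proof.
elim: s k => [|l s IH] k /= h; first by case: k h.
have [hk|hk] := leqP k (sumn s).
  rewrite (IH k hk) [in RHS]ifT; last by lia.
  have -> : l + sumn s - k - l = sumn s - k by lia.
  rewrite addnC; congr (_ + _).
  case: ifP => hl; last by rewrite nsubsum_gt //; lia.
  by rewrite IH; [congr nsubsum|]; lia.
rewrite nsubsum_gt // add0n [in RHS]ifF; last by apply/negbTE; lia.
rewrite addn0; case: ifP => hl; last by rewrite nsubsum_gt //; lia.
by rewrite IH; [congr nsubsum|]; lia.
Qed.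

Lemma leq_nsubsum_catl u s k : nsubsum s k <= nsubsum (u ++ s) k.
Proof.
elim: u k => [|x u IH] k //=.
exact: leq_trans (IH k) (leq_addr _ _).
Qed.

Lemma leq_nsubsum_catr u s k :
  sumn u <= k -> nsubsum s (k - sumn u) <= nsubsum (u ++ s) k.
Proof.
elim: u k => [|x u IH] k /=; first by rewrite subn0.
move=> h; rewrite ifT; last by lia.
apply: leq_trans (leq_addl _ _).
have -> : k - (x + sumn u) = (k - x) - sumn u by lia.
by apply: IH; lia.
Qed.

(* Replacing a part [l] by parts [x :: w] of the same total can only create
   new subsets of a given sum: those meeting [x :: w] partially. *)
Lemma leq_nsubsum_split x w s k :
  nsubsum s k + (if x + sumn w <= k then nsubsum s (k - (x + sumn w)) else 0)
    <= nsubsum (x :: w ++ s) k.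
Proof.
rewrite /=; apply: leq_add; first exact: leq_nsubsum_catl.
case: ifP => h; last by case: ifP.
rewrite ifT; last by lia.
have -> : k - (x + sumn w) = (k - x) - sumn w by lia.
by apply: leq_nsubsum_catr; lia.
Qed.

Definition parts23 (l : nat) : seq nat :=
  if odd l then 3 :: nseq (l - 3)./2 2 else 2 :: nseq (l./2).-1 2.

Fixpoint refine23 (s : seq nat) : seq nat :=
  if s is l :: s' then parts23 l ++ refine23 s' else [::].

Lemma parts23_cons l : 2 <= l -> exists x w, parts23 l = x :: w /\ x + sumn w = l.
Proof.
move=> hl; rewrite /parts23; case: ifP => h.
  by exists 3, (nseq (l - 3)./2 2); rewrite sumn_nseq; split => //; lia.
by exists 2, (nseq (l./2).-1 2); rewrite sumn_nseq; split => //; lia.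
Qed.

Lemma refine23_all s : all is23 (refine23 s).
Proof.
elim: s => [|l s IH] //=; rewrite all_cat IH andbT /parts23.
by case: ifP => _ /=; rewrite all_nseq /is23 /= orbT.
Qed.

Lemma sumn_refine23 s : all (leq 2) s -> sumn (refine23 s) = sumn s.
Proof.
elim: s => [|l s IH] //= /andP [hl hs].
have [x [w [-> <-]]] := parts23_cons hl.
by rewrite sumn_cat IH.
Qed.

Lemma leq_nsubsum_refine23 s k : all (leq 2) s -> nsubsum s k <= nsubsum (refine23 s) k.
Proof.
elim: s k => [|l s IH] k //= /andP [hl hs].
have [x [w [-> hx]]] := parts23_cons hl.
apply: leq_trans (leq_nsubsum_split x w (refine23 s) k).
rewrite hx; apply: leq_add; first exact: IH.
by case: ifP => // _; apply: IH.
Qed.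

Lemma nsub23_0_odd b k : odd k -> nsub23 0 b k = 0.
Proof. by move=> hk; rewrite /nsub23 big_ord_recl big_ord0 /nsub2 /= addn0 subn0 hk. Qed.

Lemma nsub23_compl a b k : k <= 3 * a + 2 * b ->
  nsub23 a b k = nsub23 a b (3 * a + 2 * b - k).
Proof.
set s := nseq a 3 ++ nseq b 2 => hk.
have s23 : all is23 s by rewrite all_cat !all_nseq /is23 /= !orbT.
have c3 : count_mem 3 s = a by rewrite count_cat !count_nseq /=; lia.
have c2 : count_mem 2 s = b by rewrite count_cat !count_nseq /=; lia.
have sums : sumn s = 3 * a + 2 * b by rewrite sumn_cat !sumn_nseq.
have := nsubsum_23 k s23; rewrite c3 c2 => <-.
by rewrite nsubsum_compl ?sums // nsubsum_23 // c3 c2.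
Qed.

Definition nbound (t r : nat) : nat :=
  if r == 2 * t then 'C(2 * t, t) else 2 * 'C(2 * t - 2, t - 1).

Lemma nsubsum_half_le s t r : all (leq 2) s -> sumn s = 2 * r ->
  (r = 2 * t \/ r = 2 * t + 1) -> 1 <= t -> nsubsum s r <= nbound t r.
Proof.
move=> s2 sums hr ht; apply: leq_trans (leq_nsubsum_refine23 r s2) _.
have s23 := refine23_all s.
rewrite nsubsum_23 //; have := sumn_23 s23; rewrite sumn_refine23 // sums /nbound.
set a := count_mem 3 _; set b := count_mem 2 _ => hab.
case: hr => hr; subst r.
  rewrite eqxx; apply: (@leq_trans (nsub23 a.+1 b (2 * t))).
    by rewrite nsub23Sl leq_addr.
  have [e ae] : exists e, a = 2 * e by exists a./2; lia.
  by rewrite ae; apply: nsub23_odd_le; lia.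
(* Here [a] is even and positive: split off one three, then use the symmetry
   [nsub23_compl] to bring both remaining terms into the range of [nsub23_odd_le]. *)
rewrite ifF; last by lia.
case: a hab => [|a] hab; first by rewrite nsub23_0_odd //; lia.
rewrite nsub23Sl ifT; last by lia.
have [e ae] : exists e, a = (2 * e).+1 by exists a./2; lia.
rewrite ae nsub23_compl; last by lia.
have -> : 3 * (2 * e).+1 + 2 * b - (2 * t + 1) = 2 * t + 1 - 3 by lia.
have -> : 2 * t + 1 - 3 = 2 * (t - 1) by lia.
have -> : 2 * t - 2 = 2 * (t - 1) by lia.
by rewrite [X in _ <= X]mul2n -addnn; apply: leq_add; apply: nsub23_odd_le; lia.
Qed.

Section StableSets.
Variables (T : finType) (g : {perm T}).

Definition stable (A : {set T}) : bool := [forall y in A, g y \in A].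

Definition stable_sets (D : {set T}) (k : nat) : {set {set T}} :=
  [set A : {set T} | (A \subset D) && stable A && (#|A| == k)].

Lemma stable_porbit (A : {set T}) y : stable A -> y \in A -> porbit g y \subset A.
Proof.
move=> /forall_inP sA yA; apply/subsetP => _ /porbitP [i ->].
elim: i => [|i IH]; first by rewrite expg0 perm1.
by rewrite expgSr permM; apply: sA.
Qed.

Lemma stableD_porbit (A : {set T}) x : stable A -> stable (A :\: porbit g x).
Proof.
move=> /forall_inP sA; apply/forall_inP => y; rewrite !inE => /andP [yC /sA ->].
rewrite andbT; apply: contra yC => gyC.
by rewrite -porbit_sym -(porbit_perm g 1) expg1 porbit_sym.
Qed.

Lemma stableU (A B : {set T}) : stable A -> stable B -> stable (A :|: B).
Proof.
move=> /forall_inP sA /forall_inP sB; apply/forall_inP => x; rewrite !inE.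
by case/orP => [/sA -> | /sB ->]; rewrite ?orbT.
Qed.

Lemma stable_sets0 k : #|stable_sets set0 k| <= (k == 0).
Proof.
have sub0 : stable_sets set0 k \subset [set set0].
  by apply/subsetP => A; rewrite !inE subset0 -andbA => /andP [].
case: k sub0 => [|k] sub0; first by rewrite /= -(cards1 (set0 : {set T})) subset_leq_card.
rewrite leqn0 cards_eq0; apply/eqP/setP => A; rewrite in_set0.
apply/negbTE/negP => /[dup] /(subsetP sub0); rewrite !inE => /eqP ->.
by rewrite cards0 andbF.
Qed.

(* The stable [k]-subsets of [D] either contain the cycle [C] of [x] or avoid it. *)
Lemma card_stable_sets_porbit (D : {set T}) x k : x \in D -> stable D ->
  #|stable_sets D k| <= #|stable_sets (D :\: porbit g x) k|
     + (if #|porbit g x| <= k then #|stable_sets (D :\: porbit g x) (k - #|porbit g x|)|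
        else 0).
Proof.
move=> xD sD; set C := porbit g x; have CD : C \subset D by apply: stable_porbit.
rewrite -(cardsID [set A : {set T} | C \subset A] (stable_sets D k)) addnC.
apply: leq_add.
  apply: subset_leq_card; apply/subsetP => A.
  rewrite !inE => /andP [CA /andP [/andP [AD sA] ->]]; rewrite sA !andbT.
  apply/subsetP => y yA; rewrite inE (subsetP AD y yA) andbT.
  apply: contra CA => yC; rewrite /C -(eqP (_ : porbit g y == porbit g x)).
    exact: stable_porbit.
  by rewrite eq_porbit_mem.
case: ifP => hk; last first.
  rewrite leqn0 cards_eq0; apply/eqP/setP => A; rewrite !inE.
  apply/negbTE/negP => /andP [/andP [_ /eqP kA] CA].
  by have := subset_leq_card CA; rewrite kA hk.
rewrite -(@card_in_imset _ _ (fun A => A :\: C)); last first.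
  move=> A B; rewrite !inE => /andP [_ CA] /andP [_ CB] /setP AB.
  apply/setP => y; have [yC|yC] := boolP (y \in C).
    by rewrite (subsetP CA y yC) (subsetP CB y yC).
  by have := AB y; rewrite !inE yC.
apply: subset_leq_card; apply/subsetP => _ /imsetP [A + ->].
rewrite !inE => /andP [/andP [/andP [AD sA] /eqP kA] CA].
by rewrite (setSD _ AD) stableD_porbit // cardsD (setIidPr CA) kA eqxx.
Qed.

Lemma stable_sets_nsubsum (D : {set T}) : stable D -> (forall x, x \in D -> g x != x) ->
  exists s, [/\ all (leq 2) s, sumn s = #|D|
              & forall k, #|stable_sets D k| <= nsubsum s k].
Proof.
elim: {D}_.+1 {-2}D (ltnSn #|D|) => // N IH D hN sD fD.
have [-> | [x xD]] := set_0Vmem D.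
  by exists [::]; split; rewrite ?cards0 // => k; exact: stable_sets0.
set C := porbit g x.
have CD : C \subset D by apply: stable_porbit.
have C2 : 2 <= #|C|.
  have gxC : g x \in C by rewrite -{1}(expg1 g) mem_porbit.
  have := subset_leq_card (_ : [set x; g x] \subset C).
  rewrite cards2 eq_sym (fD x xD); apply.
  by apply/subsetP => z; rewrite !inE => /orP [] /eqP ->; rewrite ?porbit_id.
have CleD := subset_leq_card CD.
have cardD : #|D :\: C| = #|D| - #|C| by rewrite cardsD (setIidPr CD).
have ltDN : #|D :\: C| < N by rewrite cardD; lia.
have fD' y : y \in D :\: C -> g y != y by rewrite inE => /andP [_ /fD].
have [s [s2 sums hs]] := IH _ ltDN (stableD_porbit x sD) fD'.
exists (#|C| :: s); split => /=; first by rewrite C2.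
  by rewrite sums cardD; lia.
move=> k; apply: leq_trans (card_stable_sets_porbit k xD sD) _.
by apply: leq_add; [|case: ifP].
Qed.

End StableSets.

Lemma mem_balls_far n r (p q s : {perm 'I_n}) :
  2 * r <= hdist p q -> s \in hball r p :&: hball r q ->
  [/\ hdist p q = 2 * r, hdist p s = r & forall i, p i != s i -> s i = q i].
Proof.
rewrite !inE /hdist => hD /andP [hp hq].
set A := [set i | p i != s i] in hp *; set B := [set i | q i != s i] in hq.
have sub : [set i | p i != q i] \subset A :|: B.
  apply/subsetP => i; rewrite !inE; apply: contraR; rewrite negb_or !negbK.
  by move=> /andP [/eqP -> /eqP ->].
have := subset_leq_card sub; rewrite cardsU => hU.
have hI : #|A :&: B| <= #|A| by apply/subset_leq_card/subsetIl.
have AB0 : #|A :&: B| = 0 by lia.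
split; [lia | lia | move=> i hi].
move/eqP: AB0; rewrite cards_eq0 => /eqP /setP /(_ i).
by rewrite !inE hi /= => /negbT; rewrite negbK => /eqP.
Qed.

(* Since [s] agrees with [q] wherever it differs from [p], the set where it differs
   from [p] is stable under [q * p^-1 = p^-1 \o q], and it determines [s]. *)
Lemma card_balls_far_le_stable n r (p q : {perm 'I_n}) : 2 * r <= hdist p q ->
  #|hball r p :&: hball r q| <= #|stable_sets (q * p^-1)%g [set i | p i != q i] r|.
Proof.
move=> hD; set g := (q * p^-1)%g.
have pg i : p (g i) = q i by rewrite permM permKV.
rewrite -(@card_in_imset _ _ (fun s : {perm 'I_n} => [set i | p i != s i])); last first.
  move=> s1 s2 /(mem_balls_far hD) [_ _ e1] /(mem_balls_far hD) [_ _ e2] /setP e.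
  apply/permP => i; have := e i; rewrite !inE.
  have [<-|n1] := eqVneq (p i) (s1 i); have [<-|n2] := eqVneq (p i) (s2 i) => //= _.
  by rewrite e1 ?n1 // e2 ?n2.
apply: subset_leq_card; apply/subsetP => _ /imsetP [s /(mem_balls_far hD) [_ ds es] ->].
rewrite inE -/(hdist p s) ds eqxx andbT; apply/andP; split.
  by apply/subsetP => i; rewrite !inE => hi; rewrite -(es i hi).
apply/forall_inP => i; rewrite !inE => hi; apply/negP => /eqP e.
have gi : g i = i by apply: (@perm_inj _ s); rewrite -e pg (es i hi).
by have := hi; rewrite (es i hi) -pg gi eqxx.
Qed.

Lemma card_balls_far_le n r t (p q : {perm 'I_n}) : 2 * r <= hdist p q ->
  (r = 2 * t \/ r = 2 * t + 1) -> 1 <= t -> #|hball r p :&: hball r q| <= nbound t r.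
Proof.
move=> hD hr ht; set g := (q * p^-1)%g; set D := [set i | p i != q i].
have [-> | [s0 /(mem_balls_far hD) [dpq _ _]]] := set_0Vmem (hball r p :&: hball r q).
  by rewrite cards0.
have Dg i : (i \in D) = (g i != i).
  by rewrite inE permM (can2_eq (permKV p) (permK p)) eq_sym.
have sD : stable g D.
  apply/forall_inP => i; rewrite !Dg; apply: contra => /eqP gg.
  by apply/eqP/(@perm_inj _ g).
have fD x : x \in D -> g x != x by rewrite Dg.
have [s [s2 sums hs]] := stable_sets_nsubsum sD fD.
apply: leq_trans (card_balls_far_le_stable hD) (leq_trans (hs r) _).
by apply: nsubsum_half_le s2 _ hr ht; rewrite sums -dpq.
Qed.

(* Conversely, applying [g] exactly on a stable [r]-subset [A] of its support gives
   a permutation at distance [r] from both [1] and [g]. *)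
Lemma stable_sets_le_card_balls n r (g : {perm 'I_n}) :
  #|[set i | g i != i]| = 2 * r ->
  #|stable_sets g [set i | g i != i] r| <= #|hball r 1 :&: hball r g|.
Proof.
move=> hD.
apply: leq_trans (leq_imset_card (fun s : {perm 'I_n} => [set i | s i != i]) _).
apply: subset_leq_card; apply/subsetP => A; rewrite inE => /andP [/andP [AD sA] /eqP kA].
have inj : injective (fun x => if x \in A then g x else x).
  apply: perm_in_inj; first by move=> x y _ _; apply: perm_inj.
  by apply/subsetP => _ /imsetP [x xA ->]; move/forall_inP: sA; apply.
set s := perm inj; have sE i : s i = if i \in A then g i else i by rewrite permE.
have eA : [set i | s i != i] = A.
  apply/setP => i; rewrite inE sE; case: ifP => hi; last by rewrite eqxx.
  by have := subsetP AD i hi; rewrite inE.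
apply/imsetP; exists s; last by rewrite eA.
rewrite !inE /hdist; apply/andP; split.
  by rewrite -kA -eA subset_leq_card //; apply/subsetP => i; rewrite !inE perm1 eq_sym.
have -> : [set i | g i != s i] = [set i | g i != i] :\: A.
  by apply/setP => i; rewrite !inE sE; case: ifP => hi; rewrite ?eqxx.
by rewrite cardsD (setIidPr AD); lia.
Qed.

Lemma leq_Nval n d r (p q : {perm 'I_n}) : d <= hdist p q ->
  #|hball r p :&: hball r q| <= Nval n d r.
Proof.
move=> h; exact: (leq_bigmax_cond (P := fun pq : {perm 'I_n} * {perm 'I_n} =>
  d <= hdist pq.1 pq.2) (F := fun pq => #|hball r pq.1 :&: hball r pq.2|) (p, q) h).
Qed.

Lemma stable_sets_le_Nval n r (g : {perm 'I_n}) :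
  #|[set i | g i != i]| = 2 * r ->
  #|stable_sets g [set i | g i != i] r| <= Nval n (2 * r) r.
Proof.
move=> hD; apply: leq_trans (stable_sets_le_card_balls hD) (leq_Nval _ _).
rewrite /hdist -hD; apply: subset_leq_card; apply/subsetP => i.
by rewrite !inE perm1 eq_sym.
Qed.

Ltac case_ifs :=
  repeat match goal with |- context [if ?b then _ else _] => case: (boolP b) => ? end.

Section Construction.
Variables (n c m : nat).
Hypothesis hn : 3 * c + 2 * m <= n.+1.

(* Rotates each triple [3k, 3k+1, 3k+2] with [k < c], swaps each pair
   [3c + 2j, 3c + 2j + 1] with [j < m], and fixes the rest. *)
Definition cyc_fun (i : nat) : nat :=
  if i < 3 * c then (if i %% 3 == 2 then i - 2 else i.+1)
  else if i < 3 * c + 2 * m then (if odd (i - 3 * c) then i.-1 else i.+1) else i.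

Lemma cyc_fun_lt i : i < n.+1 -> cyc_fun i < n.+1.
Proof. rewrite /cyc_fun; case_ifs; lia. Qed.

Lemma cyc_fun_ord_inj : injective (fun i : 'I_n.+1 => inord (cyc_fun i) : 'I_n.+1).
Proof.
move=> i j /(congr1 (@nat_of_ord _)); rewrite /= !inordK ?cyc_fun_lt // => h; apply: val_inj => /=.
have := ltn_ord i; have := ltn_ord j; move: h; rewrite /cyc_fun; case_ifs; lia.
Qed.

Definition cyc : {perm 'I_n.+1} := perm cyc_fun_ord_inj.

Lemma cycE i : cyc i = cyc_fun i :> nat.
Proof. by rewrite permE /= inordK ?cyc_fun_lt. Qed.

Lemma cyc_support : [set i | cyc i != i] = [set i : 'I_n.+1 | i < 3 * c + 2 * m].
Proof.
apply/setP => i; rewrite !inE -val_eqE /= cycE /cyc_fun.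
by have hi := ltn_ord i; case_ifs; apply/idP/idP; lia.
Qed.

Lemma card_cyc_support : #|[set i | cyc i != i]| = 3 * c + 2 * m.
Proof.
have lt_n (k : 'I_(3 * c + 2 * m)) : k < n.+1 := leq_trans (ltn_ord k) hn.
have inj : injective (fun k : 'I_(3 * c + 2 * m) => inord k : 'I_n.+1).
  by move=> k1 k2 /(congr1 (@nat_of_ord _)); rewrite /= !inordK //; apply: val_inj.
rewrite cyc_support -[RHS](card_ord (3 * c + 2 * m)) -(card_imset _ inj).
apply: eq_card => i; rewrite inE; apply/idP/imsetP => [hi | [k _ ->]].
  by exists (Ordinal hi); rewrite //= inord_val.
by rewrite inordK.
Qed.

Definition pair_lo (j : 'I_m) : 'I_n.+1 := inord (3 * c + 2 * j).
Definition pair_hi (j : 'I_m) : 'I_n.+1 := inord (3 * c + 2 * j).+1.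

Lemma pair_loE j : pair_lo j = 3 * c + 2 * j :> nat.
Proof. by rewrite inordK //; have := ltn_ord j; lia. Qed.

Lemma pair_hiE j : pair_hi j = (3 * c + 2 * j).+1 :> nat.
Proof. by rewrite inordK //; have := ltn_ord j; lia. Qed.

Definition pairs_set (J : {set 'I_m}) : {set 'I_n.+1} :=
  [set pair_lo j | j in J] :|: [set pair_hi j | j in J].

Lemma pair_lo_inj : injective pair_lo.
Proof.
by move=> j1 j2 /(congr1 (@nat_of_ord _)); rewrite !pair_loE => h; apply: val_inj => /=; lia.
Qed.

Lemma pair_hi_inj : injective pair_hi.
Proof.
by move=> j1 j2 /(congr1 (@nat_of_ord _)); rewrite !pair_hiE => h; apply: val_inj => /=; lia.
Qed.

Lemma mem_pair_lo j J : (pair_lo j \in pairs_set J) = (j \in J).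
Proof.
rewrite inE (mem_imset _ _ pair_lo_inj); case: (j \in J) => //=.
by apply/negbTE/imsetP => -[j' _ /(congr1 (@nat_of_ord _))]; rewrite pair_loE pair_hiE; lia.
Qed.

Lemma pairs_set_inj : injective pairs_set.
Proof. by move=> J1 J2 e; apply/setP => j; rewrite -!mem_pair_lo e. Qed.

Lemma card_pairs_set J : #|pairs_set J| = 2 * #|J|.
Proof.
rewrite cardsU (card_imset _ pair_lo_inj) (card_imset _ pair_hi_inj).
suff -> : [set pair_lo j | j in J] :&: [set pair_hi j | j in J] = set0.
  by rewrite cards0 subn0 mul2n addnn.
apply/setP => x; rewrite !inE; apply/negbTE/andP => -[/imsetP [j1 _ ->]].
by case/imsetP => j2 _ /(congr1 (@nat_of_ord _)); rewrite pair_loE pair_hiE; lia.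
Qed.

Lemma pairs_set_in_stable_sets J :
  pairs_set J \in stable_sets cyc [set i | cyc i != i] (2 * #|J|).
Proof.
rewrite inE card_pairs_set eqxx andbT; apply/andP; split.
  rewrite cyc_support; apply/subsetP => x; rewrite !inE.
  by case/orP => /imsetP [j _ ->]; rewrite ?pair_loE ?pair_hiE; have := ltn_ord j; lia.
apply/forall_inP => x; rewrite !inE => /orP [] /imsetP [j jJ ->]; apply/orP;
  [right | left]; apply/imsetP; exists j => //; apply: val_inj;
  rewrite /= cycE pair_loE pair_hiE /cyc_fun; have := ltn_ord j; case_ifs; lia.
Qed.

Definition triple_pt (k : 'I_c) (x : 'I_3) : 'I_n.+1 := inord (3 * k + x).

Lemma triple_ptE k x : triple_pt k x = 3 * k + x :> nat.
Proof. by rewrite inordK //; have := ltn_ord k; have := ltn_ord x; lia. Qed.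

Definition triple (k : 'I_c) : {set 'I_n.+1} := [set triple_pt k x | x : 'I_3].

Lemma mem_triple k k' x : (triple_pt k x \in triple k') = (k == k').
Proof.
apply/imsetP/eqP => [[x' _ /(congr1 (@nat_of_ord _))] | ->]; last by exists x.
rewrite !triple_ptE => e; apply: val_inj => /=.
by have := ltn_ord x; have := ltn_ord x'; lia.
Qed.

Lemma card_triple k : #|triple k| = 3.
Proof.
rewrite card_imset ?card_ord // => x1 x2 /(congr1 (@nat_of_ord _)).
by rewrite !triple_ptE => e; apply: val_inj => /=; lia.
Qed.

Lemma triple_pt_notin_pairs k x J : triple_pt k x \notin pairs_set J.
Proof.
rewrite !inE negb_or; apply/andP; split; apply/imsetP => -[j _ /(congr1 (@nat_of_ord _))];
  by rewrite triple_ptE ?pair_loE ?pair_hiE; have := ltn_ord x; have := ltn_ord k; lia.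
Qed.

Lemma pair_lo_notin_triple j k : pair_lo j \notin triple k.
Proof.
apply/imsetP => -[x _ /(congr1 (@nat_of_ord _))].
by rewrite triple_ptE pair_loE; have := ltn_ord x; have := ltn_ord k; lia.
Qed.

Lemma triple_pairs_in_stable_sets k J :
  triple k :|: pairs_set J \in stable_sets cyc [set i | cyc i != i] (3 + 2 * #|J|).
Proof.
move: (pairs_set_in_stable_sets J); rewrite !inE => /andP [/andP [PD sP] /eqP cP].
rewrite subUset PD andbT; apply/andP; split; first apply/andP; first split.
- rewrite cyc_support; apply/subsetP => _ /imsetP [x _ ->]; rewrite inE triple_ptE.
  by have := ltn_ord x; have := ltn_ord k; lia.
- apply: stableU sP; apply/forall_inP => _ /imsetP [x _ ->].
  have y3 : (if x == 2 :> nat then 0 else x.+1) < 3 by case: ifP; have := ltn_ord x; lia.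
  apply/imsetP; exists (Ordinal y3) => //; apply: val_inj.
  by rewrite /= cycE !triple_ptE /= /cyc_fun; have := ltn_ord x; have := ltn_ord k; case_ifs; lia.
rewrite cardsU card_triple cP.
suff -> : triple k :&: pairs_set J = set0 by rewrite cards0 subn0.
apply/setP => y; rewrite in_setI in_set0; apply/negbTE/andP => -[/imsetP [x _ ->]].
by rewrite (negbTE (triple_pt_notin_pairs _ _ _)).
Qed.

Lemma triple_pairs_inj : injective (fun kJ : 'I_c * {set 'I_m} => triple kJ.1 :|: pairs_set kJ.2).
Proof.
move=> [k1 J1] [k2 J2] /= /setP e.
have k12 : k1 = k2.
  have := e (triple_pt k1 ord0).
  rewrite in_setU [in RHS]in_setU !mem_triple eqxx /=.
  by rewrite (negbTE (triple_pt_notin_pairs _ _ _)) orbF => /esym/eqP.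
subst k2; congr pair; apply/setP => j; have := e (pair_lo j).
by rewrite in_setU [in RHS]in_setU !(negbTE (pair_lo_notin_triple _ _)) !mem_pair_lo.
Qed.

End Construction.

Lemma Nval_even_ge n t : 0 < t -> 4 * t <= n ->
  'C(2 * t, t) <= Nval n (2 * (2 * t)) (2 * t).
Proof.
case: n => [|n] ht hn; first by lia.
have hcm : 3 * 0 + 2 * (2 * t) <= n.+1 by lia.
set g := cyc hcm; apply: leq_trans (stable_sets_le_Nval (g := g) _); last first.
  by rewrite card_cyc_support muln0 add0n.
rewrite -[X in 'C(X, _)](card_ord (2 * t)) -card_draws -(card_imset _ (pairs_set_inj hcm)).
apply: subset_leq_card; apply/subsetP => _ /imsetP [J + ->]; rewrite inE => /eqP hJ.
by have := pairs_set_in_stable_sets hcm J; rewrite hJ.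
Qed.

Lemma Nval_odd_ge n t : 0 < t -> 2 * (2 * t + 1) <= n ->
  2 * 'C(2 * t - 2, t - 1) <= Nval n (2 * (2 * t + 1)) (2 * t + 1).
Proof.
case: n => [|n] ht hn; first by lia.
have hcm : 3 * 2 + 2 * (2 * t - 2) <= n.+1 by lia.
set g := cyc hcm; apply: leq_trans (stable_sets_le_Nval (g := g) _); last first.
  by rewrite card_cyc_support; lia.
pose S := setX [set: 'I_2] [set J : {set 'I_(2 * t - 2)} | #|J| == t - 1].
have -> : 2 * 'C(2 * t - 2, t - 1) = #|S| by rewrite cardsX cardsT card_ord card_draws card_ord.
rewrite -(card_imset _ (triple_pairs_inj hcm)).
apply: subset_leq_card; apply/subsetP => _ /imsetP [[k J] /setXP [_ JS] ->].
have hJ : #|J| = t - 1 by move: JS; rewrite inE => /eqP.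
have -> : 2 * t + 1 = 3 + 2 * #|J| by rewrite hJ; lia.
exact: (triple_pairs_in_stable_sets hcm k J).
Qed.

Theorem theorem1 (t r n : nat) :
  2 <= t -> (r = 2 * t \/ r = 2 * t + 1) -> 2 * r <= n ->
  Nval n (2 * r) r =
    (if r == 2 * t then 'C(2 * t, t) else 2 * 'C(2 * t - 2, t - 1)).
Proof.
move=> ht hr hn; rewrite -/(nbound t r); apply/eqP; rewrite eqn_leq; apply/andP; split.
  by apply/bigmax_leqP => pq hpq; apply: card_balls_far_le hpq hr _; lia.
rewrite /nbound; case: hr => hr; subst r.
  by rewrite eqxx; apply: Nval_even_ge; lia.
by rewrite ifF; [apply: Nval_odd_ge | apply/negbTE]; lia.
Qed.
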